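(* Let $(Q,\cdot)$ be a quadratical quasigroup, $a,b\in Q$ distinct, and $t$ a positive integer. Then $t1,t3,t4,t2$ are four distinct elements and $t1\cdot t3=t3\cdot t4=t4\cdot t2=t2\cdot t1=aba$; that is, $(t1,t3,t4,t2)$ is a $4$-cycle based on $aba$.
   Context: A quadratical quasigroup is a quasigroup satisfying $xy\cdot x=zx\cdot yz$ (equivalently, a groupoid satisfying $x\cdot x=x$, $yx\cdot xy=x$, $xy\cdot zw=xz\cdot yw$). $aba$ denotes $ab\cdot a$. The elements $tk$ are defined by $11=a$, $12=ab$, $13=ba$, $14=b$ and, for $n\ge2$, $n1=(n-1)1\cdot(n-1)2$, $n2=(n-1)2\cdot(n-1)4$, $n3=(n-1)3\cdot(n-1)1$, $n4=(n-1)4\cdot(n-1)3$. An ($n$-)cycle based on $c$ is a sequence $x_1,\dots,x_n$ of distinct elements with $x_1x_2=x_2x_3=\dots=x_{n-1}x_n=x_nx_1=c$. *)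

From Stdlib Require Import Arith List.
Import ListNotations.

Definition quasigroup {Q : Type} (op : Q -> Q -> Q) : Prop :=
  (forall a b : Q, exists x : Q, op a x = b /\ forall x', op a x' = b -> x' = x) /\
  (forall a b : Q, exists y : Q, op y a = b /\ forall y', op y' a = b -> y' = y).

Definition quadratical {Q : Type} (op : Q -> Q -> Q) : Prop :=
  quasigroup op /\
  forall x y z : Q, op (op x y) x = op (op z x) (op y z).

(* The quadruple (t1, t2, t3, t4) for t = n+1:
   11 = a, 12 = ab, 13 = ba, 14 = b, and
   n1 = (n-1)1.(n-1)2, n2 = (n-1)2.(n-1)4,
   n3 = (n-1)3.(n-1)1, n4 = (n-1)4.(n-1)3. *)
Fixpoint tq {Q : Type} (op : Q -> Q -> Q) (a b : Q) (n : nat) : Q * Q * Q * Q :=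
  match n with
  | O => (a, op a b, op b a, b)
  | S m =>
      let '(x1, x2, x3, x4) := tq op a b m in
      (op x1 x2, op x2 x4, op x3 x1, op x4 x3)
  end.

Definition tk {Q : Type} (op : Q -> Q -> Q) (a b : Q) (t k : nat) : Q :=
  let '(x1, x2, x3, x4) := tq op a b (t - 1) in
  match k with
  | 1 => x1 | 2 => x2 | 3 => x3 | _ => x4
  end.

Fixpoint chain_based {Q : Type} (op : Q -> Q -> Q) (c : Q) (l : list Q) : Prop :=
  match l with
  | x :: ((y :: _) as r) => op x y = c /\ chain_based op c r
  | _ => True
  end.

Definition cycle_based {Q : Type} (op : Q -> Q -> Q) (c : Q) (l : list Q) : Prop :=
  match l with
  | nil => False
  | x :: _ =>
      List.NoDup l /\ chain_based op c l /\ op (List.last l x) x = c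
  end.

From Stdlib Require Import Arith List.
Import ListNotations.

Set Implicit Arguments.

(* One step of the recursion sends a closed walk x1 x3 x4 x2 based on c (each
   product of consecutive vertices equals c) to a closed walk based on c again,
   because xy.zx = xz.yx and c.c = c; the starting walk a, ba, b, ab is based on
   aba. A closed 4-walk with a repeated vertex collapses to the constant walk c
   (cancellation, and xy = yx forces x = y), so the distinctness of one pair of
   adjacent vertices, which survives each step, already gives the distinctness
   of all four. *)

Lemma quasigroup_cancel_l (Q : Type) (op : Q -> Q -> Q) (x u v : Q) :
  quasigroup op -> op x u = op x v -> u = v.
Proof.
  intros [Hl _] E. destruct (Hl x (op x u)) as [y [_ Hy]].
  rewrite (Hy u eq_refl), (Hy v (eq_sym E)). reflexivity.
Qed.

Section Quadratical.

Variables (Q : Type) (op : Q -> Q -> Q).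
Hypothesis Hq : quadratical op.

Lemma mul_cancel_l x u v : op x u = op x v -> u = v.
Proof. apply quasigroup_cancel_l, Hq. Qed.

Lemma quadratical_law x y z : op (op x y) x = op (op z x) (op y z).
Proof. apply Hq. Qed.

Lemma mul_idem x : op x x = x.
Proof.
  symmetry. apply (mul_cancel_l (x := op x x)). apply quadratical_law.
Qed.

Lemma mul_swap_swap x z : op (op z x) (op x z) = x.
Proof. rewrite <- quadratical_law, !mul_idem. reflexivity. Qed.

Lemma mul_aba_sym x y : op (op x y) x = op (op y x) y.
Proof. rewrite (quadratical_law x y y), mul_idem. reflexivity. Qed.

Lemma mul_semimedial x y z : op (op x y) (op z x) = op (op x z) (op y x).
Proof.
  rewrite <- (quadratical_law y z x), <- (quadratical_law z y x).
  apply mul_aba_sym.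
Qed.

Lemma mul_comm_eq x y : op x y = op y x -> x = y.
Proof.
  intro E. pose proof (mul_swap_swap x y). pose proof (mul_swap_swap y x).
  congruence.
Qed.

Definition walk4 (c v1 v2 v3 v4 : Q) : Prop :=
  op v1 v2 = c /\ op v2 v3 = c /\ op v3 v4 = c /\ op v4 v1 = c.

Lemma walk4_rotate c v1 v2 v3 v4 : walk4 c v1 v2 v3 v4 -> walk4 c v2 v3 v4 v1.
Proof. unfold walk4. tauto. Qed.

Lemma walk4_adjacent_eq c v1 v2 v3 v4 :
  walk4 c v1 v2 v3 v4 -> v1 = v2 -> v1 = c /\ v3 = c /\ v4 = c.
Proof.
  intros (H12 & H23 & H34 & _) <-. rewrite mul_idem in H12. subst v1.
  assert (v3 = c) as ->.
  { apply (mul_cancel_l (x := c)). rewrite mul_idem. exact H23. }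
  assert (v4 = c) as ->.
  { apply (mul_cancel_l (x := c)). rewrite mul_idem. exact H34. }
  auto.
Qed.

Lemma walk4_diagonal_eq c v1 v2 v3 v4 :
  walk4 c v1 v2 v3 v4 -> v1 = v3 -> v1 = v2.
Proof.
  intros (H12 & H23 & _) <-. apply mul_comm_eq. congruence.
Qed.

Lemma walk4_distinct c v1 v2 v3 v4 : walk4 c v1 v2 v3 v4 -> v4 <> v1 ->
  v1 <> v2 /\ v1 <> v3 /\ v1 <> v4 /\ v2 <> v3 /\ v2 <> v4 /\ v3 <> v4.
Proof.
  intros W N.
  pose proof (walk4_rotate W) as W2. pose proof (walk4_rotate W2) as W3.
  assert (N12 : v1 <> v2).
  { intro E. destruct (walk4_adjacent_eq W E) as (? & ? & ?). congruence. }
  assert (N23 : v2 <> v3).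
  { intro E. destruct (walk4_adjacent_eq W2 E) as (? & ? & ?). congruence. }
  assert (N34 : v3 <> v4).
  { intro E. destruct (walk4_adjacent_eq W3 E) as (? & ? & ?). congruence. }
  repeat split; auto.
  - intro E. exact (N12 (walk4_diagonal_eq W E)).
  - intro E. exact (N23 (walk4_diagonal_eq W2 E)).
Qed.

Lemma walk4_cycle_based c v1 v2 v3 v4 : walk4 c v1 v2 v3 v4 -> v4 <> v1 ->
  cycle_based op c [v1; v2; v3; v4].
Proof.
  intros W N. destruct (walk4_distinct W N) as (? & ? & ? & ? & ? & ?).
  destruct W as (? & ? & ? & ?). simpl.
  repeat split; auto.
  repeat constructor; simpl; intuition congruence.
Qed.

Lemma walk4_step c x1 x2 x3 x4 : walk4 c x1 x3 x4 x2 ->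
  walk4 c (op x1 x2) (op x3 x1) (op x4 x3) (op x2 x4).
Proof.
  intros (H13 & H34 & H42 & H21).
  repeat split; rewrite mul_semimedial;
    [rewrite H13, H21 | rewrite H34, H13 | rewrite H42, H34 | rewrite H21, H42];
    apply mul_idem.
Qed.

Lemma walk4_step_neq c x1 x2 x3 x4 : walk4 c x1 x3 x4 x2 -> x2 <> x1 ->
  op x2 x4 <> op x1 x2.
Proof.
  intros W N E.
  pose proof (walk4_step W) as W'. do 3 apply walk4_rotate in W'.
  destruct (walk4_adjacent_eq W' E) as (Hc & _).
  destruct W as (_ & _ & _ & H21).
  apply N, mul_comm_eq. congruence.
Qed.

Lemma walk4_tq_base a b : walk4 (op (op a b) a) a (op b a) b (op a b).
Proof.
  repeat split.
  - rewrite (quadratical_law a b a), mul_idem. reflexivity.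
  - symmetry. apply mul_aba_sym.
  - rewrite mul_aba_sym, (quadratical_law b a b), mul_idem. reflexivity.
Qed.

Lemma walk4_tq a b n : a <> b ->
  let '(x1, x2, x3, x4) := tq op a b n in
  walk4 (op (op a b) a) x1 x3 x4 x2 /\ x2 <> x1.
Proof.
  intro Nab. induction n as [|n IH]; simpl.
  - split; [apply walk4_tq_base|].
    intro E. apply Nab. apply (mul_cancel_l (x := a)). rewrite mul_idem. auto.
  - destruct (tq op a b n) as [[[x1 x2] x3] x4]. destruct IH as [W N].
    split; [apply walk4_step | apply (walk4_step_neq W)]; assumption.
Qed.

End Quadratical.

Theorem proposition3p11 (Q : Type) (op : Q -> Q -> Q) (a b : Q) (t : nat) :
  quadratical op -> a <> b -> 1 <= t ->
  let t1 := tk op a b t 1 in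
  let t2 := tk op a b t 2 in
  let t3 := tk op a b t 3 in
  let t4 := tk op a b t 4 in
  let aba := op (op a b) a in
  (t1 <> t3 /\ t1 <> t4 /\ t1 <> t2 /\ t3 <> t4 /\ t3 <> t2 /\ t4 <> t2) /\
  (op t1 t3 = aba /\ op t3 t4 = aba /\ op t4 t2 = aba /\ op t2 t1 = aba) /\
  cycle_based op aba (t1 :: t3 :: t4 :: t2 :: nil).
Proof.
  intros Hq Nab Ht. destruct t as [|n]; [inversion Ht|].
  unfold tk. simpl Nat.sub. rewrite Nat.sub_0_r.
  pose proof (walk4_tq Hq n Nab) as Hn.
  destruct (tq op a b n) as [[[x1 x2] x3] x4]. destruct Hn as [W N].
  split; [|split].
  - exact (walk4_distinct Hq W N).
  - exact W.
  - exact (walk4_cycle_based Hq W N).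
Qed.
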